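(* Let $(\vdash,\overline{\cdot},\widehat{\cdot})$ be a setting satisfying Pre-Relevance, let $\mathcal{S},\mathcal{S}'\subseteq\mathcal{L}$ with $\mathcal{S}\mid\mathcal{S}'$, let $\mathcal{E}_1$ be a complete extension of $\mathcal{AF}_{\vdash}(\mathcal{S})$, $\mathcal{E}_2$ a complete extension of $\mathcal{AF}_{\vdash}(\mathcal{S}')$, and $\mathcal{E}=\mathsf{Defended}(\mathcal{E}_1\cup\mathcal{E}_2,\mathcal{AF}_{\vdash}(\mathcal{S}\cup\mathcal{S}'))$. Then (1) $\mathcal{E}\cap\mathit{Arg}_{\vdash}(\mathcal{S})=\mathcal{E}_1$ and $\mathcal{E}\cap\mathit{Arg}_{\vdash}(\mathcal{S}')=\mathcal{E}_2$, and (2) $\mathcal{E}$ is a complete extension of $\mathcal{AF}_{\vdash}(\mathcal{S}\cup\mathcal{S}')$.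
   Context: $\mathcal{L}$ is the set of formulas of a language built from propositional atoms; $\mathsf{Atoms}(\mathcal{S})$ is the set of atoms occurring in $\mathcal{S}$, and $\mathcal{S}_1\mid\mathcal{S}_2$ means $\mathsf{Atoms}(\mathcal{S}_1)\cap\mathsf{Atoms}(\mathcal{S}_2)=\emptyset$. A setting is $(\vdash,\overline{\cdot},\widehat{\cdot})$ with ${\vdash}\subseteq\wp_{\sf fin}(\mathcal{L})\times\mathcal{L}$ arbitrary, $\overline{\cdot}:\mathcal{L}\to\wp(\mathcal{L})$, $\widehat{\cdot}$ assigning to each nonempty finite set a finite set of formulas, with $\widehat{\emptyset}=\emptyset$. $\mathit{Arg}_{\vdash}(\mathcal{S})=\{(\Gamma,\gamma):\Gamma\subseteq\mathcal{S}\text{ finite},\Gamma\vdash\gamma\}$; $\mathcal{AF}_{\vdash}(\mathcal{S})$ is the attack graph on it where $(\Gamma,\gamma)$ attacks $(\Gamma',\gamma')$ iff $\gamma\in\overline{\phi}$ for some $\phi\in\widehat{\Gamma'}$. $\mathcal{A}$ defends $a$ iff every attacker of $a$ in the framework is attacked by a member of $\mathcal{A}$; $\mathsf{Defended}(\mathcal{A},\mathcal{AF}_{\vdash}(\mathcal{S}))$ is the set of arguments of $\mathit{Arg}_{\vdash}(\mathcal{S})$ defended by $\mathcal{A}$. Complete = conflict-free, defends all its members, and contains every argument it defends. Pre-Relevance of the setting: (a) for all $\mathcal{S}_1,\mathcal{S}_2,\phi$ with $\mathcal{S}_1\cup\{\phi\}\mid\mathcal{S}_2$, $\mathcal{S}_1\cup\mathcal{S}_2\vdash\phi$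 implies $\mathcal{S}_1'\vdash\phi$ for some $\mathcal{S}_1'\subseteq\mathcal{S}_1$; (b) primeness: for all sets of atoms $\mathcal{A}_1\mid\mathcal{A}_2$, all finite $\mathcal{S}_1,\mathcal{T}_1,\mathcal{S}_2,\mathcal{T}_2$ with $\mathsf{Atoms}(\mathcal{S}_i),\mathsf{Atoms}(\mathcal{T}_i)\subseteq\mathcal{A}_i$, and all $\phi,\psi$ with $\psi\in\overline{\phi}$, $\phi\in\widehat{\mathcal{T}_1\cup\mathcal{T}_2}$: if $\mathcal{S}_1\cup\mathcal{S}_2\vdash\psi$ then there are $i\in\{1,2\}$, $\mathcal{S}_i'\subseteq\mathcal{S}_i$, $\phi_i\in\widehat{\mathcal{T}_i}$, $\psi_i\in\overline{\phi_i}$ with $\mathcal{S}_i'\vdash\psi_i$; (c) $\widehat{\Delta}\subseteq\widehat{\Delta\cup\Delta'}$ for all finite $\Delta,\Delta'$. *)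

From HB Require Import structures.
From mathcomp Require Import all_boot finmap.
Set Implicit Arguments. Unset Strict Implicit. Unset Printing Implicit Defensive.
Local Open Scope fset_scope.

Section Defs.
(* L : the formulas; Atom : the propositional atoms; Atoms phi a : atom a occurs in phi *)
Variables (L : choiceType) (Atom : Type) (Atoms : L -> Atom -> Prop).

Definition AtomsOf (S : L -> Prop) (a : Atom) : Prop := exists phi, S phi /\ Atoms phi a.

Definition indep (S1 S2 : L -> Prop) : Prop :=
  forall a, AtomsOf S1 a -> AtomsOf S2 a -> False.

Definition fs (G : {fset L}) : L -> Prop := fun x => x \in G.

(* A setting: der Γ γ  is  Γ ⊢ γ ;  bar phi psi  is  psi ∈ overline(phi) ;
   hat Γ  is  widehat(Γ). *)
Variables (der : {fset L} -> L -> Prop) (bar : L -> L -> Prop)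
          (hat : {fset L} -> {fset L}).

Definition PreRelevance : Prop :=
  (forall (S1 S2 : {fset L}) (phi : L),
      indep (fun x => x \in S1 \/ x = phi) (fs S2) ->
      der (S1 `|` S2) phi ->
      exists S1' : {fset L}, S1' `<=` S1 /\ der S1' phi) /\
  (forall (A1 A2 : Atom -> Prop), (forall a, A1 a -> A2 a -> False) ->
   forall (S1 T1 S2 T2 : {fset L}),
     (forall a, AtomsOf (fs S1) a -> A1 a) ->
     (forall a, AtomsOf (fs T1) a -> A1 a) ->
     (forall a, AtomsOf (fs S2) a -> A2 a) ->
     (forall a, AtomsOf (fs T2) a -> A2 a) ->
   forall phi psi : L, bar phi psi -> phi \in hat (T1 `|` T2) ->
     der (S1 `|` S2) psi ->
     (exists (S1' : {fset L}) (phi1 psi1 : L),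
         S1' `<=` S1 /\ phi1 \in hat T1 /\ bar phi1 psi1 /\ der S1' psi1) \/
     (exists (S2' : {fset L}) (phi2 psi2 : L),
         S2' `<=` S2 /\ phi2 \in hat T2 /\ bar phi2 psi2 /\ der S2' psi2)) /\
  (forall D D' : {fset L}, hat D `<=` hat (D `|` D')).

Definition argument := ({fset L} * L)%type.

Definition Arg (S : L -> Prop) (a : argument) : Prop :=
  (forall x, x \in a.1 -> S x) /\ der a.1 a.2.

Definition attacks (a b : argument) : Prop :=
  exists phi, phi \in hat b.1 /\ bar phi a.2.

Definition defends (S : L -> Prop) (A : argument -> Prop) (a : argument) : Prop :=
  forall b, Arg S b -> attacks b a -> exists c, A c /\ attacks c b.

Definition Defended (S : L -> Prop) (A : argument -> Prop) (a : argument) : Prop :=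
  Arg S a /\ defends S A a.

Definition conflict_free (E : argument -> Prop) : Prop :=
  forall a b, E a -> E b -> ~ attacks a b.

Definition complete (S : L -> Prop) (E : argument -> Prop) : Prop :=
  (forall a, E a -> Arg S a) /\
  conflict_free E /\
  (forall a, E a -> defends S E a) /\
  (forall a, Arg S a -> defends S E a -> E a).

End Defs.

(** Primeness makes every attack between arguments over [S ∪ S'] factor
    through a sub-argument of the attacker living entirely in [S] or in [S'].
    An attack from the [S']-side on an argument over [S] is even witnessed by
    an argument with no premises; as [hat fset0 = fset0] such arguments are
    unattacked, hence belong to every complete extension, so [E1] already
    counterattacks it.  Thus [E1 ∪ E2] is conflict-free and defends each [E_i]
    inside the joint framework, and every counterattack available to [E]
    shrinks to one by a sub-argument lying in [E1] or in [E2]. *)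

From Stdlib Require Import ClassicalEpsilon.
From HB Require Import structures.
From mathcomp Require Import all_boot finmap.
Local Open Scope fset_scope.
Set Implicit Arguments. Unset Strict Implicit.

Lemma fset_split_or (L : choiceType) (P Q : L -> Prop) (G : {fset L}) :
  (forall x, x \in G -> P x \/ Q x) ->
  exists G1 G2 : {fset L}, [/\ G = G1 `|` G2, forall x, x \in G1 -> P x
                            & forall x, x \in G2 -> Q x].
Proof.
move=> PQG; pose p x : bool := excluded_middle_informative (P x).
exists [fset x in G | p x], [fset x in G | ~~ p x]; split.
- by apply/fsetP => x; rewrite in_fsetU !inE; case: (x \in G); case: (p x).
- by move=> x; rewrite !inE /p => /andP[_]; case: excluded_middle_informative.
- move=> x; rewrite !inE /p => /andP[xG].
  by case: excluded_middle_informative => // nPx _; case: (PQG x xG).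
Qed.

Lemma indep_sym (L : choiceType) (Atom : Type) (Atoms : L -> Atom -> Prop)
  (S S' : L -> Prop) : indep Atoms S S' -> indep Atoms S' S.
Proof. by move=> SS' a aS' aS; apply: SS' aS aS'. Qed.

Section Setting.

Variables (L : choiceType) (Atom : Type) (Atoms : L -> Atom -> Prop)
  (der : {fset L} -> L -> Prop) (bar : L -> L -> Prop)
  (hat : {fset L} -> {fset L}).

Local Notation argument := (argument L).
Local Notation Arg := (Arg der).
Local Notation attacks := (attacks bar hat).
Local Notation defends := (defends der bar hat).
Local Notation Defended := (Defended der bar hat).
Local Notation complete := (complete der bar hat).
Local Notation conflict_free := (conflict_free bar hat).
Local Notation indep := (indep Atoms).
Local Notation AtomsOf := (AtomsOf Atoms).

Lemma sub_defends S (A B : argument -> Prop) a :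
  (forall c, A c -> B c) -> defends S A a -> defends S B a.
Proof.
by move=> AB defA b bS ba; have [c [/AB Bc cb]] := defA b bS ba; exists c.
Qed.

Lemma Defended_conflict_free S (A : argument -> Prop) :
  (forall a, A a -> Arg S a) -> conflict_free A -> conflict_free (Defended S A).
Proof.
move=> AS cfA a b [aS defa] [_ defb] ab.
have [c [Ac ca]] := defb a aS ab.
have [d [Ad dc]] := defa c (AS c Ac) ca.
exact: cfA Ad Ac dc.
Qed.

Lemma AtomsOf_sub S (G : {fset L}) a :
  (forall x, x \in G -> S x) -> AtomsOf (fs G) a -> AtomsOf S a.
Proof. by move=> GS [phi [phiG phia]]; exists phi; split => //; apply: GS. Qed.

Lemma AtomsOf_fset0 a (P : Atom -> Prop) : AtomsOf (fs fset0) a -> P a.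
Proof. by case=> phi []; rewrite /fs in_fset0. Qed.

Hypothesis hat0 : hat fset0 = fset0.

Lemma theorem_in_complete S E psi :
  complete S E -> der fset0 psi -> E (fset0, psi).
Proof.
case=> _ [_ [_ Edef]] der_psi; apply: Edef.
- by split => // x; rewrite in_fset0.
- by move=> b _ [phi []]; rewrite hat0 in_fset0.
Qed.

Hypothesis HPR : PreRelevance Atoms der bar hat.

Lemma hatS (A B : {fset L}) : A `<=` B -> hat A `<=` hat B.
Proof. by move/fsetUidPr <-; apply: HPR.2.2. Qed.

Lemma attacks_subarg (c : argument) G psi b :
  attacks c (G, psi) -> G `<=` b.1 -> attacks c b.
Proof.
move=> [phi [phiG bar_phi]] Gb.
by exists phi; split => //; apply: fsubsetP (hatS Gb) _ phiG.
Qed.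

Lemma defends_subarg S A (c : argument) G psi :
  G `<=` c.1 -> defends S A c -> defends S A (G, psi).
Proof. by move=> Gc defc b bS bG; apply: defc bS (attacks_subarg bG Gc). Qed.

Lemma cross_attack_theorem S S' (y c : argument) :
  indep S S' -> Arg S' y -> (forall x, x \in c.1 -> S x) -> attacks y c ->
  exists psi, der fset0 psi /\ attacks (fset0, psi) c.
Proof.
move=> SS' [yS' der_y] cS [phi [phic bar_phi]].
have := HPR.2.1 _ _ (indep_sym SS') y.1 fset0 fset0 c.1
  (fun a => AtomsOf_sub yS') (fun a => AtomsOf_fset0 _)
  (fun a => AtomsOf_fset0 _) (fun a => AtomsOf_sub cS) phi y.2 bar_phi.
rewrite fset0U fsetU0 => /(_ phic der_y).
case=> [[G [phi1 [psi1 [_ [] ]]]] | [G [phi2 [psi2 [G0 [phi2c [bar2 derG]]]]]]].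
  by rewrite hat0 in_fset0.
move: G0 derG; rewrite fsubset0 => /eqP -> der_psi2.
by exists psi2; split => //; exists phi2.
Qed.

Lemma complete_counterattacks S S' E (y c : argument) :
  indep S S' -> complete S E -> Arg S' y -> (forall x, x \in c.1 -> S x) ->
  attacks y c -> exists z, E z /\ attacks z c.
Proof.
move=> SS' HE yS' cS yc.
have [psi [der_psi psi_c]] := cross_attack_theorem SS' yS' cS yc.
by exists (fset0, psi); split => //; apply: theorem_in_complete HE der_psi.
Qed.

Lemma pure_subattack S S' SU (b c : argument) :
  indep S S' -> (forall x, SU x -> S x \/ S' x) ->
  Arg SU b -> (forall x, x \in c.1 -> SU x) -> attacks b c ->
  exists G psi, [/\ G `<=` b.1, Arg S (G, psi) \/ Arg S' (G, psi)
                   & attacks (G, psi) c].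
Proof.
move=> SS' SU_split [bSU der_b] cSU [phi [phic bar_phi]].
have [B1 [B2 [b_split B1S B2S']]] :=
  fset_split_or (fun x xb => SU_split x (bSU x xb)).
have [C1 [C2 [c_split C1S C2S']]] :=
  fset_split_or (fun x xc => SU_split x (cSU x xc)).
rewrite b_split in der_b; rewrite c_split in phic.
have := HPR.2.1 _ _ SS' B1 C1 B2 C2
  (fun a => AtomsOf_sub B1S) (fun a => AtomsOf_sub C1S)
  (fun a => AtomsOf_sub B2S') (fun a => AtomsOf_sub C2S') phi b.2 bar_phi phic.
case/(_ der_b) => [[G [phi1 [psi [GB [phi1C [bar1 derG]]]]]]
                  | [G [phi1 [psi [GB [phi1C [bar1 derG]]]]]]].
- exists G, psi; split; first by rewrite b_split (fsubset_trans GB) ?fsubsetUl.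
  + by left; split => // x /(fsubsetP GB) /B1S.
  + exists phi1; split => //; apply: fsubsetP phi1C.
    by apply: hatS; rewrite c_split fsubsetUl.
- exists G, psi; split; first by rewrite b_split (fsubset_trans GB) ?fsubsetUr.
  + by right; split => // x /(fsubsetP GB) /B2S'.
  + exists phi1; split => //; apply: fsubsetP phi1C.
    by apply: hatS; rewrite c_split fsubsetUr.
Qed.

Section OneSide.

(* [SU] and [A] are given up to equivalence so that the section also applies
   with the roles of the two sides exchanged. *)
Variables (S S' SU : L -> Prop) (E1 E2 A : argument -> Prop).
Hypotheses (indepSS' : indep S S') (SU_def : forall x, SU x <-> S x \/ S' x)
  (A_def : forall a, A a <-> E1 a \/ E2 a)
  (HE1 : complete S E1) (HE2 : complete S' E2).

Lemma Arg_SU a : Arg S a -> Arg SU a.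
Proof. by case=> aS der_a; split => // x /aS Sx; apply/SU_def; left. Qed.

Lemma no_attack_on_complete c d : E1 c -> E2 d -> ~ attacks d c.
Proof.
move=> E1c E2d dc.
have [z [E1z zc]] :=
  complete_counterattacks indepSS' HE1 (HE2.1 d E2d) (HE1.1 c E1c).1 dc.
exact: HE1.2.1 E1z E1c zc.
Qed.

Lemma defends_restrict a : Arg S a -> defends SU A a -> E1 a.
Proof.
move=> aS defa; apply: HE1.2.2.2 => // b bS ba.
have [c [/A_def[E1c | E2c] cb]] := defa b (Arg_SU bS) ba; first by exists c.
exact: complete_counterattacks indepSS' HE1 (HE2.1 c E2c) bS.1 cb.
Qed.

Lemma complete_sub_Defended a : E1 a -> Defended SU A a.
Proof.
move=> E1a; have aS := HE1.1 a E1a.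
split; first exact: Arg_SU.
move=> b bSU ba.
have SU_split x : SU x -> S x \/ S' x by move/SU_def.
have aSU x : x \in a.1 -> SU x by move/aS.1 => Sx; apply/SU_def; left.
have [G [psi [Gb [GS | GS'] Ga]]] := pure_subattack indepSS' SU_split bSU aSU ba.
- have [c [E1c cG]] := HE1.2.2.1 a E1a _ GS Ga.
  by exists c; split; [apply/A_def; left | apply: attacks_subarg cG Gb].
- have [z [E1z za]] :=
    complete_counterattacks indepSS' HE1 GS' aS.1 Ga.
  by case: (HE1.2.1 z a E1z E1a za).
Qed.

End OneSide.

Lemma conflict_free_union S S' E1 E2 :
  indep S S' -> complete S E1 -> complete S' E2 ->
  conflict_free (fun a => E1 a \/ E2 a).
Proof.
move=> SS' HE1 HE2 a b [E1a | E2a] [E1b | E2b].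
- exact: HE1.2.1.
- exact: (no_attack_on_complete (indep_sym SS') HE2 HE1 E2b E1a).
- exact: (no_attack_on_complete SS' HE1 HE2 E1b E2a).
- exact: HE2.2.1.
Qed.

End Setting.

Theorem lemma6 (L : choiceType) (Atom : Type) (Atoms : L -> Atom -> Prop)
  (der : {fset L} -> L -> Prop) (bar : L -> L -> Prop) (hat : {fset L} -> {fset L})
  (hat0 : hat fset0 = fset0)
  (HPR : PreRelevance Atoms der bar hat)
  (S S' : L -> Prop) (HSS' : indep Atoms S S')
  (E1 E2 : argument L -> Prop)
  (HE1 : complete der bar hat S E1)
  (HE2 : complete der bar hat S' E2) :
  let SU := fun x => S x \/ S' x in
  let E := Defended der bar hat SU (fun a => E1 a \/ E2 a) in
  ((forall a, E a /\ Arg der S a <-> E1 a) /\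
   (forall a, E a /\ Arg der S' a <-> E2 a)) /\
  complete der bar hat SU E.
Proof.
move=> SU E.
pose A a := E1 a \/ E2 a.
have SU_def x : SU x <-> S x \/ S' x by [].
have SU_def' x : SU x <-> S' x \/ S x by apply: or_comm.
have A_def a : A a <-> E1 a \/ E2 a by [].
have A_def' a : A a <-> E2 a \/ E1 a by apply: or_comm.
have HS'S := indep_sym HSS'.
have E1_E a (E1a : E1 a) : E a :=
  complete_sub_Defended hat0 HPR HSS' SU_def A_def HE1 E1a.
have E2_E a (E2a : E2 a) : E a :=
  complete_sub_Defended hat0 HPR HS'S SU_def' A_def' HE2 E2a.
have E1_restrict a : Arg der S a -> defends der bar hat SU A a -> E1 a :=
  defends_restrict hat0 HPR HSS' SU_def A_def HE1 HE2 (a := a).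
have E2_restrict a : Arg der S' a -> defends der bar hat SU A a -> E2 a :=
  defends_restrict hat0 HPR HS'S SU_def' A_def' HE2 HE1 (a := a).
have E12_E b : A b -> E b by case=> [/E1_E | /E2_E].
split; [split => a; split|].
- by case=> -[_ defa] aS; apply: E1_restrict.
- by move=> E1a; split; [apply: E1_E | apply: HE1.1].
- by case=> -[_ defa] aS; apply: E2_restrict.
- by move=> E2a; split; [apply: E2_E | apply: HE2.1].
split; [by move=> a []|split; [|split]].
- apply: Defended_conflict_free => [a /E12_E [] //|].
  exact: (conflict_free_union hat0 HPR HSS' HE1 HE2).
- by move=> a [_ defa]; apply: sub_defends E12_E defa.
- move=> a aSU defa; split => // b bSU ba.
  have [c [Ec cb]] := defa b bSU ba.
  have [G [psi [Gc GS Gb]]] :=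
    pure_subattack HPR HSS' (fun x => id) Ec.1 bSU.1 cb.
  have defG : defends der bar hat SU A (G, psi) := defends_subarg HPR Gc Ec.2.
  exists (G, psi); split => //.
  by case: GS => GS; [left; apply: E1_restrict | right; apply: E2_restrict].
Qed.
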